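(* Let $Q$ be a finite set of item collections; for each $q\in Q$ let $n_q\ge 1$ be the number of items in $q$. On a probability space, let there be, for each $q\in Q$ and $i\in\{1,\ldots,n_q\}$, random variables: a feature vector $x_{q,i}$, a relevance indicator $r_{q,i}\in\{0,1\}$, an examination indicator $e_{q,i}\in\{0,1\}$, and a target (click) label $c_{q,i}\in\{0,1\}$. Let $\mathcal{I}_q=\{r_{q,1},\ldots,r_{q,n_q},x_{q,1},\ldots,x_{q,n_q}\}$ and define the conditional examination probabilities $$p_{q,i}=P\{e_{q,i}=1\mid \mathcal{I}_q\},\qquad p_{q,i,j}=P\{e_{q,i}e_{q,j}=1\mid \mathcal{I}_q\},\quad i,j\in\{1,\ldots,n_q\}.$$ Assume: (1) (examination hypothesis) $c_{q,i}=e_{q,i}\, r_{q,i}$ for all $q\in Q$ and all $i=1,\ldots,n_q$; (2) (positivity) $p_{q,i}>0$ and $p_{q,i,j}>0$ for all $q\in Q$ and all $i,j=1,\ldots,n_q$. Let $f$ be a (deterministic) ranking model mapping feature vectors to real scores, and let $\ell_{1,1},\ell_{1,0},\ell_{0,1},\ell_{0,0}$ be real-valued functions of two real scores. Set $$\mathbf{z}(u,v)=\big(\ell_{1,1}(u,v),\ \ell_{1,0}(u,v),\ \ell_{0,1}(u,v),\ \ell_{0,0}(u,v)\big)^{\mathsf T},\qquad \mathbf{s}(b_1,b_2)=\big(b_1b_2,\ b_1(1-b_2),\ (1-b_1)b_2,\ (1-b_1)(1-b_2)\big)^{\mathsf T}$$ for $b_1,b_2\in\{0,1\}$. With $a_{q,i}=1/p_{q,i}$,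 $a_{q,j}=1/p_{q,j}$, $a_{q,i,j}=1/p_{q,i,j}$, define the $4\times 4$ matrix $$\mathbf{A}_{q,i,j}=\begin{pmatrix} a_{q,i,j} & 0 & 0 & 0\\ a_{q,i}-a_{q,i,j} & a_{q,i} & 0 & 0\\ a_{q,j}-a_{q,i,j} & 0 & a_{q,j} & 0\\ 1-a_{q,i}-a_{q,j}+a_{q,i,j} & 1-a_{q,i} & 1-a_{q,j} & 1\end{pmatrix},$$ and the loss $$L_u=\sum_{q\in Q}\sum_{i,j=1}^{n_q}\mathbf{z}\big(f(x_{q,i}),f(x_{q,j})\big)^{\mathsf T}\,\mathbf{A}_{q,i,j}\,\mathbf{s}(c_{q,i},c_{q,j}).$$ Then $L_u$ is unbiased, i.e. $$\mathrm{E}[L_u]=\mathrm{E}\left[\sum_{q\in Q}\sum_{i,j=1}^{n_q}\mathbf{z}\big(f(x_{q,i}),f(x_{q,j})\big)^{\mathsf T}\,\mathbf{s}(r_{q,i},r_{q,j})\right].$$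
   Context: This is the setting of pairwise learning-to-rank with position bias: $r_{q,i}$ is the (unobserved) true relevance of the $i$-th item of collection $q$, $e_{q,i}$ indicates whether the user examined it, and $c_{q,i}$ is the observed implicit-feedback label (e.g. a click). The examination indicators of different items need not be independent, and examination need not be independent of relevance. All expectations appearing in the statement are assumed to exist (be finite). *)

From HB Require Import structures.
From mathcomp Require Import all_boot all_order all_algebra.
From mathcomp Require Import all_classical all_reals all_analysis.
Set Implicit Arguments. Unset Strict Implicit. Unset Printing Implicit Defensive.
Import Order.TTheory GRing.Theory Num.Theory.
Local Open Scope classical_set_scope.
Local Open Scope ring_scope.

Definition zvec (R : realType) (l11 l10 l01 l00 : R -> R -> R) (u v : R)
  : 'cV[R]_4 :=
  \col_(k < 4) match nat_of_ord k with
               | 0 => l11 u v | 1 => l10 u v | 2 => l01 u v | _ => l00 u v end.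

Definition svec (R : realType) (b1 b2 : R) : 'cV[R]_4 :=
  \col_(k < 4) match nat_of_ord k with
               | 0 => b1 * b2 | 1 => b1 * (1 - b2)
               | 2 => (1 - b1) * b2 | _ => (1 - b1) * (1 - b2) end.

Definition Amx (R : realType) (ai aj aij : R) : 'M[R]_4 :=
  \matrix_(k < 4, l < 4)
    match nat_of_ord k, nat_of_ord l with
    | 0, 0 => aij
    | 1, 0 => ai - aij | 1, 1 => ai
    | 2, 0 => aj - aij | 2, 2 => aj
    | 3, 0 => 1 - ai - aj + aij | 3, 1 => 1 - ai | 3, 2 => 1 - aj | 3, 3 => 1
    | _, _ => 0
    end.

Definition quadform (R : realType) (z : 'cV[R]_4) (M : 'M[R]_4) (s : 'cV[R]_4)
  : R := ((z^T *m M *m s) ord0 ord0).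

(* generating family of I_q = {r_{q,1..n}, x_{q,1..n}}: preimages of
   measurable sets under the r_{q,i} and the x_{q,i} *)
Definition info_gen d dX (Omega : measurableType d) (X : measurableType dX)
  (R : realType) (n : nat) (r : 'I_n -> Omega -> R) (x : 'I_n -> Omega -> X)
  : set (set Omega) :=
  [set A | exists i : 'I_n,
     (exists B : set R, measurable B /\ A = r i @^-1` B) \/
     (exists B : set X, measurable B /\ A = x i @^-1` B)].

Definition info_sigma d dX (Omega : measurableType d) (X : measurableType dX)
  (R : realType) (n : nat) (r : 'I_n -> Omega -> R) (x : 'I_n -> Omega -> X)
  : set (set Omega) := <<s info_gen r x >>.

(* p is a version of the conditional expectation E[Y | G] (G a sub-sigma-algebra
   given as a set system): p is G-measurable, integrable, and
   \int_A Y = \int_A p for every A in G. *)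
Definition is_cond_exp d (Omega : measurableType d) (R : realType)
  (P : probability Omega R) (G : set (set Omega)) (Y p : Omega -> R) : Prop :=
  (forall B : set R, measurable B -> G (p @^-1` B)) /\
  P.-integrable setT (EFin \o p) /\
  (forall A, G A ->
     (\int[P]_(w in A) (Y w)%:E = \int[P]_(w in A) (p w)%:E)%E).

Definition dotc (R : realType) (z s : 'cV[R]_4) : R := ((z^T *m s) ord0 ord0).

From HB Require Import structures.
From mathcomp Require Import all_boot all_order all_algebra.
From mathcomp Require Import all_classical all_reals all_analysis.
From mathcomp Require Import measurable_realfun.
From mathcomp Require Import ring.

Set Implicit Arguments.
Unset Strict Implicit.
Unset Printing Implicit Defensive.
Import Order.TTheory GRing.Theory Num.Theory.
Local Open Scope classical_set_scope.
Local Open Scope ring_scope.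

(* The matrix [Amx] describes how examination acts on [svec]:
   [svec (e1 * r1) (e2 * r2) = Amx e1 e2 (e1 * e2) *m svec r1 r2].  Each summand
   of L_u is therefore a combination of the indicators of the four examination
   outcomes of the pair (i, j), with coefficients that are measurable with
   respect to I_q.  Conditioning on I_q replaces these indicators by their
   conditional probabilities, i.e. [Amx e_i e_j (e_i e_j)] by
   [Amx p_i p_j p_ij], and [Amx] at the reciprocals is the inverse of that
   matrix.  Integrability of each outcome term follows from that of the summand,
   which it equals on its outcome; this is where the examination indicators
   need to be binary (the relevance and click labels need not be). *)

Section examination_algebra.
Variable R : realType.
Implicit Types (z s : 'cV[R]_4) (M N : 'M[R]_4).

(* At (p_i, p_j, p_ij): the conditional probability of the examination outcome
   (e_i, e_j) = (b1, b2). *)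
Definition outcome_weight (x1 x2 x12 : R) (b1 b2 : bool) : R :=
  match b1, b2 with
  | true, true => x12
  | true, false => x1 - x12
  | false, true => x2 - x12
  | false, false => (1 - x2) - (x1 - x12)
  end.

Lemma outcome_weight_indicator (e1 e2 : R) b1 b2 :
  e1 = 0 \/ e1 = 1 -> e2 = 0 \/ e2 = 1 ->
  outcome_weight e1 e2 (e1 * e2) b1 b2 = ((e1 == b1%:R) && (e2 == b2%:R))%:R.
Proof.
by case=> ->; case=> ->; case: b1; case: b2;
  rewrite /= ?eqxx ?oner_eq0 ?(eq_sym 0) ?oner_eq0 /=; ring.
Qed.

Lemma sum_outcome_weight_svec (x1 x2 x12 r1 r2 : R) :
  \sum_(b1 : bool) \sum_(b2 : bool)
     outcome_weight x1 x2 x12 b1 b2 *: svec (b1%:R * r1) (b2%:R * r2) =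
  Amx x1 x2 x12 *m svec r1 r2.
Proof.
apply/matrixP => k l; rewrite !big_bool !mxE !big_ord_recl big_ord0 !mxE /=.
by case: k => [[|[|[|[|//]]]] ?] /=; ring.
Qed.

Lemma svecM (x1 x2 r1 r2 : R) :
  svec (x1 * r1) (x2 * r2) = Amx x1 x2 (x1 * x2) *m svec r1 r2.
Proof.
apply/matrixP => k l; rewrite !mxE !big_ord_recl big_ord0 !mxE /=.
by case: k => [[|[|[|[|//]]]] ?] /=; ring.
Qed.

Lemma Amx_invK (p1 p2 p12 : R) : p1 != 0 -> p2 != 0 -> p12 != 0 ->
  Amx p1^-1 p2^-1 p12^-1 *m Amx p1 p2 p12 = 1%:M.
Proof.
move=> p1N0 p2N0 p12N0; apply/matrixP => k l.
rewrite !mxE !big_ord_recl big_ord0 !mxE /=.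
by case: k => [[|[|[|[|//]]]] ?]; case: l => [[|[|[|[|//]]]] ?] /=;
  field; rewrite ?p1N0 ?p2N0 ?p12N0.
Qed.

Lemma quadform_mulmx z M N s : quadform z M (N *m s) = quadform z (M *m N) s.
Proof. by rewrite /quadform !mulmxA. Qed.

Lemma quadform1 z s : quadform z 1%:M s = dotc z s.
Proof. by rewrite /quadform /dotc mulmx1. Qed.

Lemma quadform_outcomes z M (x1 x2 x12 r1 r2 : R) :
  \sum_(b1 : bool) \sum_(b2 : bool)
     quadform z M (svec (b1%:R * r1) (b2%:R * r2)) * outcome_weight x1 x2 x12 b1 b2 =
  quadform z (M *m Amx x1 x2 x12) (svec r1 r2).
Proof.
rewrite -quadform_mulmx -sum_outcome_weight_svec /quadform mulmx_sumr summxE.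
apply: eq_bigr => b1 _; rewrite mulmx_sumr summxE; apply: eq_bigr => b2 _.
by rewrite -scalemxAr [RHS]mxE mulrC.
Qed.

End examination_algebra.

Section measurable_examination.
Context d (T : measurableType d) (R : realType) (D : set T).

Lemma measurable_quadform (z : T -> 'cV[R]_4) (M : T -> 'M[R]_4)
    (s : T -> 'cV[R]_4) :
  (forall k, measurable_fun D (fun t => z t k ord0)) ->
  (forall k l, measurable_fun D (fun t => M t k l)) ->
  (forall k, measurable_fun D (fun t => s t k ord0)) ->
  measurable_fun D (fun t => quadform (z t) (M t) (s t)).
Proof.
move=> mz mM ms.
have -> : (fun t => quadform (z t) (M t) (s t)) = (fun t =>
    \sum_(l < 4) (\sum_(k < 4) z t k ord0 * M t k l) * s t l ord0).
  apply/funext => t; rewrite /quadform mxE; apply: eq_bigr => l _.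
  by rewrite !mxE; congr (_ * _); apply: eq_bigr => k _; rewrite mxE.
apply: measurable_sum => l; apply: measurable_funM => //.
by apply: measurable_sum => k; exact: measurable_funM.
Qed.

Lemma measurable_Amx_entry (x1 x2 x12 : T -> R) :
  measurable_fun D x1 -> measurable_fun D x2 -> measurable_fun D x12 ->
  forall k l, measurable_fun D (fun t => Amx (x1 t) (x2 t) (x12 t) k l).
Proof.
move=> m1 m2 m12 k l; under eq_fun do rewrite mxE.
case: k => [[|[|[|[|//]]]] ?]; case: l => [[|[|[|[|//]]]] ?] /=;
  repeat first [exact: measurable_cst | assumption
               | apply: measurable_funB | apply: measurable_funD].
Qed.

Lemma measurable_svec_entry (r1 r2 : T -> R) :
  measurable_fun D r1 -> measurable_fun D r2 ->
  forall k, measurable_fun D (fun t => svec (r1 t) (r2 t) k ord0).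
Proof.
move=> m1 m2 k; under eq_fun do rewrite mxE.
case: k => [[|[|[|[|//]]]] ?] /=;
  repeat first [exact: measurable_cst | assumption
               | apply: measurable_funB | apply: measurable_funM].
Qed.

Lemma measurable_outcome_weight (x1 x2 x12 : T -> R) b1 b2 :
  measurable_fun D x1 -> measurable_fun D x2 -> measurable_fun D x12 ->
  measurable_fun D (fun t => outcome_weight (x1 t) (x2 t) (x12 t) b1 b2).
Proof.
move=> m1 m2 m12; case: b1; case: b2 => //=;
  repeat first [exact: measurable_cst | assumption | apply: measurable_funB].
Qed.

End measurable_examination.

Lemma measurable_inv (R : realType) : measurable_fun [set: R] (@GRing.inv R).
Proof.
rewrite -(setUv [set 0%R]); apply/measurable_funU => //; first exact: measurableC.
split; first exact: measurable_fun_set1.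
apply: open_continuous_measurable_fun.
  apply: closed_openC; apply: accessible_closed_set1.
  apply: hausdorff_accessible; exact: Rhausdorff.
by move=> x /set_mem /= x0; apply: inv_continuous; exact/eqP.
Qed.

Lemma measurable_zvec_entry d (T : measurableType d) (R : realType)
    (l11 l10 l01 l00 : R -> R -> R) (u v : T -> R) :
  measurable_fun setT (fun uv : R * R => l11 uv.1 uv.2) ->
  measurable_fun setT (fun uv : R * R => l10 uv.1 uv.2) ->
  measurable_fun setT (fun uv : R * R => l01 uv.1 uv.2) ->
  measurable_fun setT (fun uv : R * R => l00 uv.1 uv.2) ->
  measurable_fun setT u -> measurable_fun setT v ->
  forall k, measurable_fun setT (fun t => zvec l11 l10 l01 l00 (u t) (v t) k ord0).
Proof.
move=> m11 m10 m01 m00 mu mv k; under eq_fun do rewrite mxE.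
have muv := measurable_fun_pair mu mv.
case: k => [[|[|[|[|//]]]] ?] /=.
- exact: measurableT_comp m11 muv.
- exact: measurableT_comp m10 muv.
- exact: measurableT_comp m01 muv.
- exact: measurableT_comp m00 muv.
Qed.

Lemma integrable_EFinB d (T : measurableType d) (R : realType)
    (mu : {measure set T -> \bar R}) (f g : T -> R) :
  mu.-integrable setT (EFin \o f) -> mu.-integrable setT (EFin \o g) ->
  mu.-integrable setT (EFin \o (f \- g)%R).
Proof.
move=> intf intg; have -> : EFin \o (f \- g)%R = ((EFin \o f) \- (EFin \o g))%E.
  by apply/funext => t /=; rewrite EFinB.
exact: integrableB.
Qed.

Section integral_finite_sum.
Context d (T : measurableType d) (R : realType) (mu : {measure set T -> \bar R}).
Variables (I : finType) (F : I -> T -> R).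
Hypothesis intF : forall i, mu.-integrable setT (fun t => (F i t)%:E).

Lemma integrable_sumr : mu.-integrable setT (fun t => (\sum_i F i t)%:E).
Proof.
under eq_fun do rewrite -sumEFin.
by apply: integrable_sum => // i _; exact: intF.
Qed.

Lemma integral_sumr :
  (\int[mu]_t (\sum_i F i t)%:E = \sum_i \int[mu]_t (F i t)%:E)%E.
Proof. by under eq_integral do rewrite -sumEFin; rewrite integral_sum. Qed.

End integral_finite_sum.

Lemma eq_integral_sumr d (T : measurableType d) (R : realType)
    (mu : {measure set T -> \bar R}) (I : finType) (F G : I -> T -> R) :
  (forall i, mu.-integrable setT (fun t => (F i t)%:E)) ->
  (forall i, mu.-integrable setT (fun t => (G i t)%:E)) ->
  (forall i, \int[mu]_t (F i t)%:E = \int[mu]_t (G i t)%:E)%E ->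
  (\int[mu]_t (\sum_i F i t)%:E = \int[mu]_t (\sum_i G i t)%:E)%E.
Proof. by move=> intF intG FG; rewrite !integral_sumr //; exact: eq_bigr. Qed.

Lemma integral_sum_pairs d (T : measurableType d) (R : realType)
    (mu : {measure set T -> \bar R}) (Q : finType) (n : Q -> nat)
    (F : forall q : Q, 'I_(n q) -> 'I_(n q) -> T -> R) :
  (forall q i j, mu.-integrable setT (fun t => (F q i j t)%:E)) ->
  (\int[mu]_t (\sum_q \sum_(i < n q) \sum_(j < n q) F q i j t)%:E =
   \sum_q \sum_(i < n q) \sum_(j < n q) \int[mu]_t (F q i j t)%:E)%E.
Proof.
move=> intF; rewrite integral_sumr => [|q]; last first.
  by apply: integrable_sumr => i; apply: integrable_sumr => j; exact: intF.
apply: eq_bigr => q _; rewrite integral_sumr => [|i]; last first.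
  by apply: integrable_sumr => j; exact: intF.
by apply: eq_bigr => i _; rewrite integral_sumr.
Qed.

Section conditional_expectation.
Context (R : realType) d (Omega : measurableType d) (P : probability Omega R).
Variable gen : set (set Omega).
Hypothesis gen_measurable : gen `<=` measurable.
(* [Omega] equipped with [G]: measurability on [T'] is G-measurability. *)
Local Notation T' := (g_sigma_algebraType gen).
Local Notation G := (<<s gen>>).
Local Open Scope ereal_scope.

Lemma sigma_gen_measurable : G `<=` measurable.
Proof. apply: smallest_sub => //; exact: sigma_algebra_measurable. Qed.

Lemma measurable_fun_gen dU (U : measurableType dU) (h : Omega -> U) :
  measurable_fun [set: T'] (h : T' -> U) -> measurable_fun [set: Omega] h.
Proof.
move=> mh _ B mB; rewrite setTI; apply: sigma_gen_measurable.
by have := mh measurableT B mB; rewrite setTI.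
Qed.

Lemma is_cond_exp_measurable (W pw : Omega -> R) :
  is_cond_exp P G W pw -> measurable_fun [set: T'] (pw : T' -> R).
Proof. by move=> [mpw _] _ B mB; rewrite setTI; exact: mpw. Qed.

Lemma integrable_binary (W : Omega -> R) :
  measurable_fun [set: Omega] W -> (forall w, W w = 0 \/ W w = 1)%R ->
  P.-integrable setT (EFin \o W).
Proof.
move=> mW W01.
apply: (le_integrable measurableT _ _ (finite_measure_integrable_cst P 1%R measurableT)).
  exact/measurable_EFinP.
by move=> w _ /=; rewrite lee_fin normr1; case: (W01 w) => ->; rewrite ?normr0 ?normr1.
Qed.

Lemma is_cond_exp1 : is_cond_exp P G (fun=> 1%R) (fun=> 1%R).
Proof.
split; last split => //; last exact: finite_measure_integrable_cst.
move=> B mB.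
by have := measurable_cst (1%R : R) (measurableT : measurable [set: T']) mB; rewrite setTI.
Qed.

Lemma is_cond_expB (W1 W2 p1 p2 : Omega -> R) :
  P.-integrable setT (EFin \o W1) -> P.-integrable setT (EFin \o W2) ->
  is_cond_exp P G W1 p1 -> is_cond_exp P G W2 p2 ->
  is_cond_exp P G (W1 \- W2)%R (p1 \- p2)%R.
Proof.
move=> iW1 iW2 c1 c2; have [_ [ip1 E1]] := c1; have [_ [ip2 E2]] := c2.
have mp : measurable_fun [set: T'] ((p1 \- p2)%R : T' -> R).
  apply: measurable_funB; [exact: is_cond_exp_measurable c1|].
  exact: is_cond_exp_measurable c2.
split; first by move=> B mB; have := mp measurableT B mB; rewrite setTI.
split; first exact: integrable_EFinB.
move=> A GA; have mA := sigma_gen_measurable GA.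
have iA (g : Omega -> R) : P.-integrable setT (EFin \o g) -> P.-integrable A (EFin \o g).
  by move=> ig; apply: integrableS ig.
under eq_integral do rewrite /= EFinB.
under [RHS]eq_integral do rewrite /= EFinB.
by rewrite !integralB_EFin ?iA // E1 // E2.
Qed.

Import HBNNSimple.

Lemma integral_nnsfunM (t : {nnsfun T' >-> R}) (F : Omega -> R) :
  measurable_fun [set: Omega] F -> (forall w, 0 <= F w)%R ->
  \int[P]_w (t w * F w)%:E = \sum_(y \in range t)
     (y%:E * \int[P]_(w in (t @^-1` [set y] : set Omega)) (F w)%:E).
Proof.
move=> mF F0.
have mA y : measurable (t @^-1` [set y] : set Omega).
  apply: sigma_gen_measurable.
  by have := measurable_funP t measurableT [set y] (measurable_set1 y); rewrite setTI.
under eq_integral do rewrite (fimfunE t) mulr_fsuml -fsumEFin//.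
rewrite ge0_integral_fsum//; last 2 first.
- move=> y; apply/measurable_EFinP; apply: measurable_funM => //.
  by apply: measurable_funM => //; exact/measurable_indic.
- move=> y w _; rewrite lee_fin; apply: mulr_ge0 => //.
  rewrite indicE; case: (boolP (w \in _)) => [/set_mem <-|_].
    by rewrite mulr1; exact: fun_ge0.
  by rewrite mulr0.
apply: eq_fsbigr => y yr.
have y0 : (0 <= y)%R by move: yr => /set_mem [w _ <-]; exact: fun_ge0.
under eq_integral do rewrite -mulrA EFinM.
rewrite ge0_integralZl_EFin //; last 2 first.
- by move=> w _; rewrite lee_fin mulr_ge0 // indicE.
- apply/measurable_EFinP; apply: measurable_funM => //; exact/measurable_indic.
congr (_ * _); rewrite [RHS]integral_mkcond; apply: eq_integral => w _.
by rewrite patchE indicE; case: (w \in _) => /=; rewrite ?mul1r ?mul0r.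
Qed.

(* The hypothesis is the case of indicators of sets in G; it extends to simple
   functions by linearity and to [h] by monotone convergence. *)
Lemma eq_integral_mul_ge0 (W pw : Omega -> R) :
  measurable_fun [set: Omega] W -> (forall w, 0 <= W w)%R ->
  measurable_fun [set: T'] (pw : T' -> R) -> (forall w, 0 <= pw w)%R ->
  (forall A, G A -> \int[P]_(w in A) (W w)%:E = \int[P]_(w in A) (pw w)%:E) ->
  forall h : Omega -> R, measurable_fun [set: T'] (h : T' -> R) ->
  (forall w, 0 <= h w)%R ->
  \int[P]_w (h w * W w)%:E = \int[P]_w (h w * pw w)%:E.
Proof.
move=> mW W0 mpw pw0 WA h mh h0.
have mh' : measurable_fun [set: T'] (EFin \o (h : T' -> R)) by exact/measurable_EFinP.
pose s := nnsfun_approx (D := [set: T']) measurableT mh'.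
have integral_lim (F : Omega -> R) : measurable_fun [set: Omega] F ->
    (forall w, 0 <= F w)%R ->
    \int[P]_w (h w * F w)%:E = limn (fun n => \int[P]_w (s n w * F w)%:E).
  move=> mF F0; rewrite -monotone_convergence //; last 3 first.
  - move=> k; apply/measurable_EFinP; apply: measurable_funM => //.
    by apply: measurable_fun_gen; exact: measurable_funP.
  - by move=> k w _; rewrite lee_fin mulr_ge0.
  - move=> w _ a b ab; rewrite lee_fin ler_wpM2r //.
    by have /lefP := @nd_nnsfun_approx _ _ _ _ measurableT _ mh' a b ab; exact.
  apply: eq_integral => w _; apply/esym/cvg_lim => //.
  rewrite EFinM; under eq_fun do rewrite EFinM.
  apply: cvgeZr => //.
  exact: (@cvg_nnsfun_approx _ _ _ _ measurableT _ mh' (fun w _ => h0 w) w I).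
rewrite (integral_lim W) // (integral_lim pw) //; last exact: measurable_fun_gen.
congr (limn _); apply/funext => k.
rewrite !integral_nnsfunM //; last exact: measurable_fun_gen.
apply: eq_fsbigr => y _; congr (_ * _); apply: WA.
by have := measurable_funP (s k) measurableT [set y] (measurable_set1 y); rewrite setTI.
Qed.

Lemma cond_exp_ae_ge0 (W pw : Omega -> R) :
  measurable_fun [set: Omega] W -> (forall w, 0 <= W w)%R ->
  is_cond_exp P G W pw -> {ae P, forall w, 0 <= pw w}%R.
Proof.
move=> mW W0 cWpw; have [_ [ipw WA]] := cWpw.
have mpw := is_cond_exp_measurable cWpw.
pose N := pw @^-1` [set` `]-oo, 0[%R].
have GN : G N by have := mpw measurableT _ (measurable_itv `]-oo, 0[%R); rewrite setTI.
have mN := sigma_gen_measurable GN.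
have abs_pwN : \int[P]_(w in N) `|(pw w)%:E| = - \int[P]_(w in N) (pw w)%:E.
  transitivity (\int[P]_(w in N) ((-1)%:E * (pw w)%:E)).
    apply: eq_integral => w; rewrite inE /N /= in_itv /= => wN.
    by rewrite ltr0_norm // -EFinM mulN1r.
  by rewrite integralZl //; [rewrite mulN1e|exact: integrableS ipw].
have : \int[P]_(w in N) `|(pw w)%:E| = 0.
  apply/eqP; rewrite eq_le integral_ge0 ?andbT; last by move=> w _; exact: abse_ge0.
  by rewrite abs_pwN -WA // oppe_le0 integral_ge0 // => w _; rewrite lee_fin.
move/(ae_eq_integral_abs P mN _).1.
have mpwN : measurable_fun N (EFin \o pw).
  by apply/measurable_EFinP; exact: measurable_funS (measurable_fun_gen mpw).
move=> /(_ mpwN); apply: filterS => w Hw; rewrite leNgt; apply/negP => pw_lt0.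
by have /Hw /= [] := (pw_lt0 : N w); move: pw_lt0 => /[swap] ->; rewrite ltxx.
Qed.

Lemma cond_exp_mul_ge0 (W pw h : Omega -> R) :
  measurable_fun [set: Omega] W -> (forall w, 0 <= W w)%R ->
  is_cond_exp P G W pw ->
  measurable_fun [set: T'] (h : T' -> R) -> (forall w, 0 <= h w)%R ->
  \int[P]_w (h w * W w)%:E = \int[P]_w (h w * pw w)%:E.
Proof.
move=> mW W0 cWpw mh h0; have [_ [_ WA]] := cWpw.
have mpw := is_cond_exp_measurable cWpw.
have mpw' : measurable_fun [set: T'] ((pw^\+)%R : T' -> R) by exact: measurable_funrpos.
have pwE : {ae P, forall w, pw w = (pw^\+)%R w}.
  by apply: filterS (cond_exp_ae_ge0 mW W0 cWpw) => w /max_idPl.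
have ae_pw (A : set Omega) (k : Omega -> R) : measurable A ->
    measurable_fun [set: Omega] k ->
    \int[P]_(w in A) (k w * pw w)%:E = \int[P]_(w in A) (k w * (pw^\+)%R w)%:E.
  move=> mA mk; apply: ae_eq_integral => //.
  - apply/measurable_EFinP; apply: measurable_funS (measurable_funM mk _) => //.
    exact: measurable_fun_gen.
  - apply/measurable_EFinP; apply: measurable_funS (measurable_funM mk _) => //.
    exact: measurable_fun_gen.
  - by apply: filterS pwE => w -> _.
rewrite ae_pw //; last exact: measurable_fun_gen.
apply: eq_integral_mul_ge0 => //.
move=> A GA; rewrite WA //.
under eq_integral do rewrite -[pw _]mul1r.
under [RHS]eq_integral do rewrite -[(_^\+)%R _]mul1r.
by rewrite ae_pw //; exact: sigma_gen_measurable.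
Qed.

Lemma cond_exp_mul_integrable (W pw h : Omega -> R) :
  measurable_fun [set: Omega] W -> (forall w, 0 <= W w)%R ->
  is_cond_exp P G W pw -> measurable_fun [set: T'] (h : T' -> R) ->
  P.-integrable setT (fun w => (h w * W w)%:E) ->
  P.-integrable setT (fun w => (h w * pw w)%:E).
Proof.
move=> mW W0 cWpw mh ihW.
have mpw := measurable_fun_gen (is_cond_exp_measurable cWpw).
have mhO := measurable_fun_gen mh.
apply/integrableP; split; first by apply/measurable_EFinP; exact: measurable_funM.
have -> : \int[P]_w `|(h w * pw w)%:E| = \int[P]_w (`|h w| * pw w)%:E.
  apply: ae_eq_integral => //.
  - by apply/measurableT_comp => //; apply/measurable_EFinP; exact: measurable_funM.
  - by apply/measurable_EFinP; apply: measurable_funM => //; exact: measurableT_comp.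
  - apply: filterS (cond_exp_ae_ge0 mW W0 cWpw) => w pw0 _.
    by rewrite /= normrM (ger0_norm pw0).
rewrite -(cond_exp_mul_ge0 mW W0 cWpw); last 2 first.
- exact: measurableT_comp.
- by move=> w; exact: normr_ge0.
have -> : \int[P]_w (`|h w| * W w)%:E = \int[P]_w `|(h w * W w)%:E|.
  by apply: eq_integral => w _; rewrite /= normrM (ger0_norm (W0 w)).
by case/integrableP: ihW.
Qed.

Lemma cond_exp_mul (W pw h : Omega -> R) :
  measurable_fun [set: Omega] W -> (forall w, 0 <= W w)%R ->
  is_cond_exp P G W pw -> measurable_fun [set: T'] (h : T' -> R) ->
  P.-integrable setT (fun w => (h w * W w)%:E) ->
  \int[P]_w (h w * W w)%:E = \int[P]_w (h w * pw w)%:E.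
Proof.
move=> mW W0 cWpw mh ihW.
have mpw := measurable_fun_gen (is_cond_exp_measurable cWpw).
have ihpw := cond_exp_mul_integrable mW W0 cWpw mh ihW.
have int_part (k F : Omega -> R) : (forall w, `|k w| <= `|h w|)%R ->
    measurable_fun [set: Omega] k -> measurable_fun [set: Omega] F ->
    P.-integrable setT (fun w => (h w * F w)%:E) ->
    P.-integrable setT (EFin \o (fun w => k w * F w)%R).
  move=> kh mk mF ihF; apply: (le_integrable measurableT _ _ ihF).
    by apply/measurable_EFinP; exact: measurable_funM.
  by move=> w _; rewrite /= lee_fin !normrM ler_wpM2r.
have hpos_le w : (`|(h^\+)%R w| <= `|h w|)%R.
  by rewrite ger0_norm ?funrpos_ge0 // /funrpos ge_max ler_norm normr_ge0.
have hneg_le w : (`|(h^\-)%R w| <= `|h w|)%R.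
  by rewrite ger0_norm ?funrneg_ge0 // /funrneg ge_max -normrN ler_norm normr_ge0.
have mhpos := measurable_funrpos mh; have mhneg := measurable_funrneg mh.
have mhposO := measurable_fun_gen mhpos; have mhnegO := measurable_fun_gen mhneg.
have hE w : h w = ((h^\+)%R w - (h^\-)%R w)%R by rewrite -[in LHS](funrposBneg h).
under eq_integral do rewrite hE mulrBl EFinB.
under [RHS]eq_integral do rewrite hE mulrBl EFinB.
rewrite !integralB_EFin //; try exact: int_part.
by rewrite !(cond_exp_mul_ge0 mW W0 cWpw).
Qed.

Lemma cond_exp_mul_event (W pw h Y : Omega -> R) :
  measurable_fun [set: Omega] W -> (forall w, W w = 0 \/ W w = 1)%R ->
  is_cond_exp P G W pw -> measurable_fun [set: T'] (h : T' -> R) ->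
  P.-integrable setT (fun w => (Y w)%:E) -> (forall w, W w = 1 -> h w = Y w)%R ->
  [/\ P.-integrable setT (fun w => (h w * W w)%:E),
      P.-integrable setT (fun w => (h w * pw w)%:E) &
      \int[P]_w (h w * W w)%:E = \int[P]_w (h w * pw w)%:E].
Proof.
move=> mW W01 cWpw mh iY hY.
have ihW : P.-integrable setT (fun w => (h w * W w)%:E).
  apply: (le_integrable measurableT _ _ iY) => [|w _].
    by apply/measurable_EFinP; apply: measurable_funM => //; exact: measurable_fun_gen.
  rewrite /= lee_fin normrM; case: (W01 w) => Ww; first by rewrite Ww normr0 mulr0.
  by rewrite Ww normr1 mulr1 hY.
have W0 w : (0 <= W w)%R by case: (W01 w) => ->.
split => //; [exact: (cond_exp_mul_integrable mW W0 cWpw)|exact: cond_exp_mul].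
Qed.

Lemma is_cond_exp_outcome_weight (ei ej pi pj pij : Omega -> R) b1 b2 :
  measurable_fun [set: Omega] ei -> measurable_fun [set: Omega] ej ->
  (forall w, ei w = 0 \/ ei w = 1)%R -> (forall w, ej w = 0 \/ ej w = 1)%R ->
  is_cond_exp P G ei pi -> is_cond_exp P G ej pj ->
  is_cond_exp P G (fun w => ei w * ej w)%R pij ->
  is_cond_exp P G (fun w => outcome_weight (ei w) (ej w) (ei w * ej w) b1 b2)
                  (fun w => outcome_weight (pi w) (pj w) (pij w) b1 b2).
Proof.
move=> mei mej ei01 ej01 ci cj cij.
have iei := integrable_binary mei ei01; have iej := integrable_binary mej ej01.
have ieij : P.-integrable setT (EFin \o (fun w => ei w * ej w)%R).
  apply: integrable_binary => [|w]; first exact: measurable_funM.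
  by case: (ei01 w) => ->; case: (ej01 w) => ->;
    rewrite ?mul0r ?mul1r; [left|left|left|right].
have i1 : P.-integrable setT (EFin \o (fun=> 1%R)).
  exact: finite_measure_integrable_cst.
case: b1; case: b2 => /=.
- exact: cij.
- exact: is_cond_expB iei ieij ci cij.
- exact: is_cond_expB iej ieij cj cij.
- apply: is_cond_expB; try apply: integrable_EFinB => //.
  + exact: is_cond_expB i1 iej is_cond_exp1 cj.
  + exact: is_cond_expB iei ieij ci cij.
Qed.

Lemma cond_exp_outcome (ei ej pi pj pij h Y : Omega -> R) (b1 b2 : bool) :
  measurable_fun [set: Omega] ei -> measurable_fun [set: Omega] ej ->
  (forall w, ei w = 0 \/ ei w = 1)%R -> (forall w, ej w = 0 \/ ej w = 1)%R ->
  is_cond_exp P G ei pi -> is_cond_exp P G ej pj ->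
  is_cond_exp P G (fun w => ei w * ej w)%R pij ->
  measurable_fun [set: T'] (h : T' -> R) -> P.-integrable setT (fun w => (Y w)%:E) ->
  (forall w, ei w = b1%:R -> ej w = b2%:R -> h w = Y w)%R ->
  [/\ P.-integrable setT (fun w =>
        (h w * outcome_weight (ei w) (ej w) (ei w * ej w) b1 b2)%:E),
      P.-integrable setT (fun w =>
        (h w * outcome_weight (pi w) (pj w) (pij w) b1 b2)%:E) &
      \int[P]_w (h w * outcome_weight (ei w) (ej w) (ei w * ej w) b1 b2)%:E =
      \int[P]_w (h w * outcome_weight (pi w) (pj w) (pij w) b1 b2)%:E].
Proof.
move=> mei mej ei01 ej01 cpi cpj cpij mh iY hY.
apply: (cond_exp_mul_event (Y := Y)) => //.
- by apply: measurable_outcome_weight => //; exact: measurable_funM.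
- move=> w; rewrite outcome_weight_indicator //.
  by case: (_ && _); [right|left].
- exact: is_cond_exp_outcome_weight.
- move=> w; rewrite outcome_weight_indicator //.
  case: eqP => [ei_b|_]; case: eqP => [ej_b|_] /=;
    [move=> _|by move/esym/eqP; rewrite oner_eq0..].
  exact: hY.
Qed.

Lemma unbiased_pair (ei ej ri rj ci cj pi pj pij : Omega -> R)
    (z : Omega -> 'cV[R]_4) :
  measurable_fun [set: Omega] ei -> measurable_fun [set: Omega] ej ->
  (forall w, ei w = 0 \/ ei w = 1)%R -> (forall w, ej w = 0 \/ ej w = 1)%R ->
  measurable_fun [set: T'] (ri : T' -> R) -> measurable_fun [set: T'] (rj : T' -> R) ->
  (forall k, measurable_fun [set: T'] ((fun w => z w k ord0) : T' -> R)) ->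
  (forall w, ci w = ei w * ri w)%R -> (forall w, cj w = ej w * rj w)%R ->
  is_cond_exp P G ei pi -> is_cond_exp P G ej pj ->
  is_cond_exp P G (fun w => ei w * ej w)%R pij ->
  {ae P, forall w, 0 < pi w}%R -> {ae P, forall w, 0 < pj w}%R ->
  {ae P, forall w, 0 < pij w}%R ->
  P.-integrable setT (fun w =>
    (quadform (z w) (Amx (pi w)^-1 (pj w)^-1 (pij w)^-1) (svec (ci w) (cj w)))%:E) ->
  \int[P]_w (quadform (z w) (Amx (pi w)^-1 (pj w)^-1 (pij w)^-1)
                (svec (ci w) (cj w)))%:E =
  \int[P]_w (dotc (z w) (svec (ri w) (rj w)))%:E.
Proof.
move=> mei mej ei01 ej01 mri mrj mz eci ecj cpi cpj cpij pi0 pj0 pij0 iY.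
pose A w := Amx (pi w)^-1 (pj w)^-1 (pij w)^-1.
pose Y w := quadform (z w) (A w) (svec (ci w) (cj w)).
pose W b1 b2 w := outcome_weight (ei w) (ej w) (ei w * ej w) b1 b2.
pose Pw b1 b2 w := outcome_weight (pi w) (pj w) (pij w) b1 b2.
pose phi (b1 b2 : bool) w := quadform (z w) (A w) (svec (b1%:R * ri w) (b2%:R * rj w)).
have mpi := is_cond_exp_measurable cpi; have mpj := is_cond_exp_measurable cpj.
have mpij := is_cond_exp_measurable cpij.
have minv (p : Omega -> R) : measurable_fun [set: T'] (p : T' -> R) ->
    measurable_fun [set: T'] ((fun w => (p w)^-1)%R : T' -> R).
  by move=> mp; exact: measurableT_comp (@measurable_inv R) mp.
have mphi b1 b2 : measurable_fun [set: T'] (phi b1 b2 : T' -> R).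
  apply: measurable_quadform => //.
    exact: measurable_Amx_entry (minv _ mpi) (minv _ mpj) (minv _ mpij).
  by apply: measurable_svec_entry; apply: measurable_funM.
have YE w : Y w = (\sum_b1 \sum_b2 phi b1 b2 w * W b1 b2 w)%R.
  by rewrite /Y eci ecj svecM quadform_mulmx quadform_outcomes.
have phiY (b1 b2 : bool) w : ei w = b1%:R -> ej w = b2%:R -> phi b1 b2 w = Y w.
  by move=> ei_b ej_b; rewrite /phi /Y eci ecj ei_b ej_b.
have outcome b1 b2 :=
  cond_exp_outcome mei mej ei01 ej01 cpi cpj cpij (mphi b1 b2) iY (phiY b1 b2).
transitivity (\int[P]_w (\sum_b1 \sum_b2 phi b1 b2 w * W b1 b2 w)%:E).
  by apply: eq_integral => w _; rewrite -YE.
transitivity (\int[P]_w (\sum_b1 \sum_b2 phi b1 b2 w * Pw b1 b2 w)%:E).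
  apply: eq_integral_sumr => b1;
    [by apply: integrable_sumr => b2; case: (outcome b1 b2)..|].
  by apply: eq_integral_sumr => b2; case: (outcome b1 b2).
apply: ae_eq_integral => //.
- apply/measurable_EFinP; apply: measurable_sum => b1; apply: measurable_sum => b2.
  apply: measurable_funM; first exact: measurable_fun_gen.
  by apply: measurable_fun_gen; exact: measurable_outcome_weight.
- apply/measurable_EFinP; apply: measurable_fun_gen.
  under eq_fun do rewrite -quadform1.
  apply: measurable_quadform => //; exact: measurable_svec_entry.
- apply: (@filterS3 _ _ _ _ _ _ _ _ pi0 pj0 pij0) => w pi_gt0 pj_gt0 pij_gt0 _.
  by rewrite /= quadform_outcomes Amx_invK ?quadform1 // gt_eqF.
Qed.

End conditional_expectation.

Section information_sigma_algebra.
Context d dX (Omega : measurableType d) (X : measurableType dX) (R : realType).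
Variables (n : nat) (r : 'I_n -> Omega -> R) (x : 'I_n -> Omega -> X).
Local Notation T' := (g_sigma_algebraType (info_gen r x)).

Lemma info_gen_measurable :
  (forall k, measurable_fun setT (r k)) -> (forall k, measurable_fun setT (x k)) ->
  info_gen r x `<=` measurable.
Proof.
move=> mr mx A [k [[B [mB ->]]|[B [mB ->]]]]; rewrite -(setTI (_ @^-1` _)).
- exact: mr.
- exact: mx.
Qed.

Lemma measurable_info_r k : measurable_fun [set: T'] (r k : T' -> R).
Proof.
move=> _ B mB; rewrite setTI; apply: sub_gen_smallest.
by exists k; left; exists B.
Qed.

Lemma measurable_info_x k : measurable_fun [set: T'] (x k : T' -> X).
Proof.
move=> _ B mB; rewrite setTI; apply: sub_gen_smallest.
by exists k; right; exists B.
Qed.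

End information_sigma_algebra.

Theorem theorem1 (R : realType) (d : measure_display) (Omega : measurableType d)
  (P : probability Omega R) (dX : measure_display) (X : measurableType dX)
  (Q : finType) (n : Q -> nat)
  (x : forall q : Q, 'I_(n q) -> Omega -> X)
  (r e c : forall q : Q, 'I_(n q) -> Omega -> R)
  (p : forall q : Q, 'I_(n q) -> Omega -> R)
  (pp : forall q : Q, 'I_(n q) -> 'I_(n q) -> Omega -> R)
  (f : X -> R) (l11 l10 l01 l00 : R -> R -> R) :
  (forall q, (0 < n q)%N) ->
  (* random variables *)
  (forall q i, measurable_fun setT (x q i)) ->
  (forall q i, measurable_fun setT (r q i)) ->
  (forall q i, measurable_fun setT (e q i)) ->
  (forall q i, measurable_fun setT (c q i)) ->
  (forall q i w, r q i w = 0 \/ r q i w = 1) ->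
  (forall q i w, e q i w = 0 \/ e q i w = 1) ->
  (forall q i w, c q i w = 0 \/ c q i w = 1) ->
  (* deterministic, measurable ranking model and pairwise loss functions *)
  measurable_fun setT f ->
  measurable_fun setT (fun uv : R * R => l11 uv.1 uv.2) ->
  measurable_fun setT (fun uv : R * R => l10 uv.1 uv.2) ->
  measurable_fun setT (fun uv : R * R => l01 uv.1 uv.2) ->
  measurable_fun setT (fun uv : R * R => l00 uv.1 uv.2) ->
  (* p_{q,i} = P{e_{q,i} = 1 | I_q},  p_{q,i,j} = P{e_{q,i} e_{q,j} = 1 | I_q} *)
  (forall q i, is_cond_exp P (info_sigma (r q) (x q)) (e q i) (p q i)) ->
  (forall q i j, is_cond_exp P (info_sigma (r q) (x q))
                   (fun w => e q i w * e q j w) (pp q i j)) ->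
  (* (1) examination hypothesis *)
  (forall q i w, c q i w = e q i w * r q i w) ->
  (* (2) positivity *)
  (forall q i, {ae P, forall w, 0 < p q i w}) ->
  (forall q i j, {ae P, forall w, 0 < pp q i j w}) ->
  (* the expectations involved exist (termwise) *)
  (forall q i j, P.-integrable setT (fun w =>
     (quadform (zvec l11 l10 l01 l00 (f (x q i w)) (f (x q j w)))
        (Amx (p q i w)^-1 (p q j w)^-1 (pp q i j w)^-1)
        (svec (c q i w) (c q j w)))%:E)) ->
  (forall q i j, P.-integrable setT (fun w =>
     (dotc (zvec l11 l10 l01 l00 (f (x q i w)) (f (x q j w)))
        (svec (r q i w) (r q j w)))%:E)) ->
  (\int[P]_w (\sum_(q : Q) \sum_(i < n q) \sum_(j < n q)
       quadform (zvec l11 l10 l01 l00 (f (x q i w)) (f (x q j w)))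
         (Amx (p q i w)^-1 (p q j w)^-1 (pp q i j w)^-1)
         (svec (c q i w) (c q j w)))%:E
   = \int[P]_w (\sum_(q : Q) \sum_(i < n q) \sum_(j < n q)
       dotc (zvec l11 l10 l01 l00 (f (x q i w)) (f (x q j w)))
         (svec (r q i w) (r q j w)))%:E)%E.
Proof.
move=> _ mx mr me _ _ e01 _ mf ml11 ml10 ml01 ml00 cp cpp hc p0 pp0 iQ iD.
rewrite !integral_sum_pairs //; apply: eq_bigr => q _.
apply: eq_bigr => i _; apply: eq_bigr => j _.
have mfx k := measurableT_comp mf (measurable_info_x (r := r q) (x := x q) k).
apply: (unbiased_pair (info_gen_measurable (mr q) (mx q)) (ei := e q i) (ej := e q j));
  first [exact: me | exact: e01 | exact: measurable_info_r | exact: hc | exact: cp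
        | exact: cpp | exact: p0 | exact: pp0 | exact: iQ
        | exact: measurable_zvec_entry ml11 ml10 ml01 ml00 (mfx i) (mfx j)].
Qed.
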